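(* Let $\mathcal M=(M,<,+,0,\ldots)$ be a definably complete locally o-minimal expansion of an ordered abelian group. Let $C\subseteq M^m$ and $P\subseteq M^n$ be definable sets with $C$ closed and bounded, and let $f:C\times P\to M$ be a definable function. Then $f$ is equi-continuous with respect to $P$ if and only if it is uniformly equi-continuous with respect to $P$.
   Context: Definable = with parameters. Definably complete: every definable subset of $M$ has sup and inf in $M\cup\{\pm\infty\}$. Locally o-minimal: for every definable $X\subseteq M$ and $a\in M$ there is an open interval $I\ni a$ with $X\cap I$ a finite union of points and open intervals. $|x|=\max_i|x_i|$. $f$ is equi-continuous w.r.t. $P$ if $\forall\varepsilon>0\ \forall x\in C\ \exists\delta>0\ \forall p\in P\ \forall x'\in C$: $|x-x'|<\delta\Rightarrow|f(x,p)-f(x',p)|<\varepsilon$. It is uniformly equi-continuous w.r.t. $P$ if $\forall\varepsilon>0\ \exists\delta>0\ \forall p\in P\ \forall x,x'\in C$: $|x-x'|<\delta\Rightarrow|f(x,p)-f(x',p)|<\varepsilon$. *)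

From HB Require Import structures.
From mathcomp Require Import all_boot all_order all_algebra.
Set Implicit Arguments. Unset Strict Implicit. Unset Printing Implicit Defensive.
Import Order.TTheory GRing.Theory Num.Theory.
Local Open Scope ring_scope.

Section Defs.
Variable M : porderZmodType.

Definition ordered_abelian_group : Prop :=
  (forall x y : M, (x <= y) || (y <= x)) /\
  (forall x y z : M, x < y -> x + z < y + z).

Definition pt n := 'I_n -> M.
Definition catf m n (x : pt m) (y : pt n) : pt (m + n) :=
  fun i => match split i with inl j => x j | inr k => y k end.

(* A first-order structure on M (van den Dries, Tame topology, Ch.1):
   Def n A  means  A is a definable (with parameters) subset of M^n *)
Definition is_structure (Def : forall n, (pt n -> Prop) -> Prop) : Prop :=
  (forall n, Def n (fun _ => False)) /\
  [/\ (forall n A, Def n A -> Def n (fun x => ~ A x)),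
      (forall n A B, Def n A -> Def n B -> Def n (fun x => A x \/ B x)),
      (forall m n (A : pt m -> Prop) (B : pt n -> Prop), Def m A -> Def n B ->
          Def (m + n) (fun z => A (fun i => z (lshift n i)) /\
                                B (fun j => z (rshift m j)))),
      (forall n (i j : 'I_n), Def n (fun x => x i = x j)) &
      (forall m n (A : pt (m + n) -> Prop), Def (m + n) A ->
          Def m (fun x => exists y : pt n, A (catf x y)))].

(* an expansion of (M,<,+,0) in which all parameters are allowed *)
Definition is_expansion (Def : forall n, (pt n -> Prop) -> Prop) : Prop :=
  [/\ is_structure Def,
      Def 2 (fun x => x ord0 < x (lift ord0 ord0)),
      Def 3 (fun x => x ord0 + x (lift ord0 ord0) = x ord_max) &
      (forall a : M, Def 1 (fun x => x ord0 = a))].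

Definition is_ub (X : M -> Prop) (b : M) := forall x, X x -> x <= b.
Definition is_lb (X : M -> Prop) (b : M) := forall x, X x -> b <= x.

(* sup/inf exist in M \cup {+-oo}: nonempty bounded definable sets have
   a sup and inf in M (empty / unbounded sets have sup,inf = +-oo) *)
Definition definably_complete (Def : forall n, (pt n -> Prop) -> Prop) : Prop :=
  forall X : pt 1 -> Prop, Def 1 X ->
    let X1 := fun a : M => X (fun _ => a) in
    ((exists a, X1 a) -> (exists b, is_ub X1 b) ->
       exists s, is_ub X1 s /\ forall b, is_ub X1 b -> s <= b) /\
    ((exists a, X1 a) -> (exists b, is_lb X1 b) ->
       exists s, is_lb X1 s /\ forall b, is_lb X1 b -> b <= s).

Definition oint (b c : M) := fun x : M => b < x /\ x < c.

Definition locally_o_minimal (Def : forall n, (pt n -> Prop) -> Prop) : Prop :=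
  forall X : pt 1 -> Prop, Def 1 X -> forall a : M,
    exists b c, b < a /\ a < c /\
      exists (pts : seq M) (ivs : seq (M * M)),
        forall x, (X (fun _ => x) /\ oint b c x) <->
          (x \in pts \/ exists2 uv, uv \in ivs & oint uv.1 uv.2 x).

Definition absM (a : M) : M := Order.max a (- a).
Definition nrm n (x : pt n) : M := \big[Order.max/0]_(i < n) absM (x i).
Definition dist n (x y : pt n) : M := nrm (fun i => x i - y i).

Definition closed_set n (C : pt n -> Prop) : Prop :=
  forall x : pt n, (forall e : M, 0 < e -> exists y, C y /\ dist x y < e) -> C x.
Definition bounded_set n (C : pt n -> Prop) : Prop :=
  exists B : M, forall x, C x -> nrm x <= B.

Definition definable_fun (Def : forall n, (pt n -> Prop) -> Prop) m n
  (C : pt m -> Prop) (P : pt n -> Prop) (f : pt m -> pt n -> M) : Prop :=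
  Def (m + n + 1) (fun z => exists x p, C x /\ P p /\
        z = catf (catf x p) (fun _ : 'I_1 => f x p)).

Definition equicontinuous m n (C : pt m -> Prop) (P : pt n -> Prop)
  (f : pt m -> pt n -> M) : Prop :=
  forall e : M, 0 < e -> forall x, C x -> exists d : M, 0 < d /\
    forall p x', P p -> C x' -> dist x x' < d -> absM (f x p - f x' p) < e.

Definition unif_equicontinuous m n (C : pt m -> Prop) (P : pt n -> Prop)
  (f : pt m -> pt n -> M) : Prop :=
  forall e : M, 0 < e -> exists d : M, 0 < d /\
    forall p x x', P p -> C x -> C x' -> dist x x' < d -> absM (f x p - f x' p) < e.

End Defs.

From HB Require Import structures.
From mathcomp Require Import all_boot all_order all_algebra.
From Stdlib Require Import Classical FunctionalExtensionality PropExtensionality.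
Set Implicit Arguments. Unset Strict Implicit. Unset Printing Implicit Defensive.
Import Order.POrderTheory GRing.Theory.
Local Open Scope ring_scope.

(* Fix e > 0 and call r an e-modulus at x if |f(x,p) - f(x',p)| < e for all p in P and
   all x' in C with |x - x'| < r (vacuously true when x is not in C).  The e-moduli form
   a definable family, downward closed in r, and equicontinuity together with closedness
   of C gives every point x a radius s that is an e-modulus at each point of the s-ball
   around x.  Definable completeness turns such a local radius into a uniform one on a
   box [-B,B]^m containing C: on an interval, the supremum of the t for which [-B,t]
   has a common radius cannot lie below B, since the local radius at the supremum pushes
   past it; boxes follow by induction on m, applying the interval case to radii that work
   along whole slices {t} x [-B,B]^(m-1).  Density of the order is used to shrink radii;
   in a discretely ordered group small balls are points and there is nothing to prove. *)

Section OrderedGroup.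
Variable M : porderZmodType.
Hypothesis HM : ordered_abelian_group M.
Implicit Types (a b c d e r s x y z : M).

Lemma comparableM x y : x >=< y.
Proof. exact: HM.1. Qed.

Lemma ltD2r z x y : (x + z < y + z) = (x < y).
Proof.
apply/idP/idP; last exact: HM.2.
by move=> /(HM.2 _ _ (- z)); rewrite !addrK.
Qed.

Lemma ltD2l z x y : (z + x < z + y) = (x < y).
Proof. by rewrite ![z + _]addrC ltD2r. Qed.

Lemma leD2r z x y : (x + z <= y + z) = (x <= y).
Proof. by rewrite !le_eqVlt ltD2r (inj_eq (addIr z)). Qed.

Lemma leD2l z x y : (z + x <= z + y) = (x <= y).
Proof. by rewrite ![z + _]addrC leD2r. Qed.

Lemma ltD a b c d : a < b -> c < d -> a + c < b + d.
Proof. by move=> ab cd; rewrite (lt_trans (y := b + c)) ?ltD2r ?ltD2l. Qed.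

Lemma subr_lt x y e : (x - y < e) = (x < e + y).
Proof. by rewrite -[x - y < e](ltD2r y) subrK. Qed.

Lemma subr_gt0 x y : (0 < y - x) = (x < y).
Proof. by rewrite -[0 < y - x](ltD2r x) subrK add0r. Qed.

Lemma lt_addl r x : (x < r + x) = (0 < r).
Proof. by rewrite -[x < r + x](ltD2r (- x)) subrr addrK. Qed.

Lemma le_addl r x : 0 <= r -> x <= r + x.
Proof. by move=> r_ge0; rewrite -{1}[x]add0r leD2r. Qed.

Lemma oppr_le_self b : 0 <= b -> - b <= b.
Proof. by move=> b_ge0; apply: (le_trans (y := 0)) => //; rewrite -(leD2r b) addNr add0r. Qed.

Lemma exists_le2_pos a b : 0 < a -> 0 < b -> exists c, [/\ 0 < c, c <= a & c <= b].
Proof.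
move=> a_gt0 b_gt0; case: (comparable_leP (comparableM a b)) => [? | /ltW ?].
  by exists a.
by exists b.
Qed.

Lemma lub_approx (X : M -> Prop) s r :
  (forall b, is_ub X b -> s <= b) -> 0 < r -> exists2 t, X t & s - r < t.
Proof.
move=> least r_gt0; apply: NNPP => no_t.
have : s <= s - r.
  apply: least => x Xx; case: (comparable_leP (comparableM x (s - r))) => // lt_x.
  by case: no_t; exists x.
have lt_s : s - r < s by rewrite subr_lt addrC lt_addl.
by move/(lt_le_trans lt_s); rewrite ltxx.
Qed.

Lemma absM_lt a e : (absM a < e) = (a < e) && (- a < e).
Proof. exact: comparable_gt_max (comparableM _ _). Qed.

Lemma absM_ge a : (a <= absM a) && (- a <= absM a).
Proof. by rewrite -comparable_ge_max ?comparableM. Qed.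

Definition near r a b := a < r + b /\ b < r + a.

Lemma absM_subr_lt x y e : absM (x - y) < e <-> near e x y.
Proof. by rewrite absM_lt opprB !subr_lt; split=> [/andP[]|[-> ->]]. Qed.

Lemma near_refl r a : 0 < r -> near r a a.
Proof. by rewrite /near lt_addl. Qed.

Lemma near_sym r a b : near r a b -> near r b a.
Proof. by case. Qed.

Lemma near_le r r' a b : r <= r' -> near r a b -> near r' a b.
Proof.
by move=> rr' [ab ba]; split; [apply: lt_le_trans ab _ | apply: lt_le_trans ba _]; rewrite leD2r.
Qed.

Lemma near_trans r s a b c : near r a b -> near s b c -> near (r + s) a c.
Proof.
move=> [ab ba] [bc cb]; split.
  by rewrite -addrA (lt_trans ab) ?ltD2l.
by rewrite [r + s]addrC -addrA (lt_trans cb) ?ltD2l.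
Qed.

Lemma near_eq_of_gap r a b : (forall c, ~ (0 < c < r)) -> near r a b -> a = b.
Proof.
move=> gap [ab ba]; case: (comparable_leP (comparableM a b)) => [|lt_ba].
  rewrite le_eqVlt => /orP[/eqP //|lt_ab].
  by case: (gap (b - a)); rewrite subr_gt0 subr_lt lt_ab.
by case: (gap (a - b)); rewrite subr_gt0 subr_lt lt_ba.
Qed.

Definition densely_ordered := forall r, 0 < r -> exists a, 0 < a < r.

Lemma exists_half r : densely_ordered -> 0 < r -> exists2 h, 0 < h & h + h <= r.
Proof.
move=> dense r_gt0; have [a /andP[a_gt0 a_lt_r]] := dense r r_gt0.
have ra_gt0 : 0 < r - a by rewrite subr_gt0.
case: (comparable_leP (comparableM a (r - a))) => [le_a_ra | lt_ra_a].
  by exists a => //; rewrite -(subrK a r) addrC leD2r.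
by exists (r - a) => //; rewrite -{3}(subrK a r) leD2l ltW.
Qed.

Lemma le_double r h : 0 <= h -> h + h <= r -> h <= r.
Proof. by move=> h_ge0; apply: le_trans; rewrite le_addl. Qed.

Lemma bigmax_lt (I : eqType) (s : seq I) (F : I -> M) d :
  \big[Order.max/0]_(i <- s) F i < d <-> 0 < d /\ forall i, i \in s -> F i < d.
Proof.
elim: s => [|j s IH]; first by rewrite big_nil; split=> [|[]].
rewrite big_cons comparable_gt_max ?comparableM //; split.
  move=> /andP[Fj /IH[d_gt0 Fs]]; split=> // i; rewrite inE => /orP[/eqP-> //|].
  exact: Fs.
move=> [d_gt0 Fs]; rewrite Fs ?mem_head //=; apply/IH; split=> // i si.
by apply: Fs; rewrite inE si orbT.
Qed.

Lemma nrm_lt n (x : pt M n) d : nrm x < d <-> 0 < d /\ forall i, absM (x i) < d.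
Proof.
rewrite /nrm bigmax_lt; split=> [] [d_gt0 lt_d]; split=> // i.
exact: lt_d (mem_index_enum i).
Qed.

Lemma absM_le_nrm n (x : pt M n) i : absM (x i) <= nrm x.
Proof.
case: (comparable_leP (comparableM (absM (x i)) (nrm x))) => // /nrm_lt[_].
by move=> /(_ i); rewrite ltxx.
Qed.

Definition ball n (x : pt M n) r (y : pt M n) := 0 < r /\ forall i, near r (x i) (y i).

Lemma dist_lt n (x y : pt M n) r : dist x y < r <-> ball x r y.
Proof.
rewrite /dist nrm_lt; split=> [] [r_gt0 xy]; split=> // i; exact/absM_subr_lt.
Qed.

Lemma ball_refl n (x : pt M n) r : 0 < r -> ball x r x.
Proof. by move=> r_gt0; split=> // i; apply: near_refl. Qed.

Lemma ball_le n (x y : pt M n) r r' : r <= r' -> ball x r y -> ball x r' y.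
Proof.
move=> rr' [r_gt0 xy]; split=> [|i]; first exact: lt_le_trans rr'.
exact: near_le rr' (xy i).
Qed.

Lemma ball_trans n (x y z : pt M n) r s : ball x r y -> ball y s z -> ball x (r + s) z.
Proof.
move=> [r_gt0 xy] [s_gt0 yz]; split=> [|i]; last exact: near_trans (xy i) (yz i).
by rewrite -[0](addr0 0) ltD.
Qed.

Lemma ball_eq_of_gap n (x y : pt M n) r : (forall c, ~ (0 < c < r)) -> ball x r y -> x = y.
Proof.
move=> gap [_ xy]; apply: functional_extensionality => i.
exact: near_eq_of_gap gap (xy i).
Qed.

Lemma absM_le_between a b : absM a <= b -> - b <= a <= b.
Proof.
move=> le_b; have /andP[a_le na_le] := absM_ge a.
have na_b := le_trans na_le le_b.
rewrite (le_trans a_le le_b) andbT -(leD2r b) addNr.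
by move: na_b; rewrite -(leD2r a) addNr addrC.
Qed.

Definition in_box B n (x : pt M n) := forall i, - B <= x i <= B.

Lemma bounded_in_box n (C : pt M n -> Prop) :
  bounded_set C -> exists2 B, 0 <= B & forall x : pt M n, C x -> in_box B x.
Proof.
case=> B C_le; have [B' [B'_ge0 B_B']] : exists B', 0 <= B' /\ B <= B'.
  by case: (comparable_leP (comparableM 0 B)) => [? | /ltW ?]; [exists B | exists 0].
exists B' => // x Cx i; apply: absM_le_between.
exact: le_trans (absM_le_nrm x i) (le_trans (C_le x Cx) B_B').
Qed.

End OrderedGroup.

Section Points.
Variable M : porderZmodType.

Definition lpart k n (w : pt M (k + n)) : pt M k := fun i => w (lshift n i).
Definition rpart k n (w : pt M (k + n)) : pt M n := fun j => w (rshift k j).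
Definition pt1 (a : M) : pt M 1 := fun _ => a.
Definition lastc k (w : pt M (k + 1)) : M := w (rshift k ord0).

Lemma catf_lshift k n (x : pt M k) (y : pt M n) i : catf x y (lshift n i) = x i.
Proof. by rewrite /catf -[lshift n i]/(unsplit (inl i)) unsplitK. Qed.

Lemma catf_rshift k n (x : pt M k) (y : pt M n) j : catf x y (rshift k j) = y j.
Proof. by rewrite /catf -[rshift k j]/(unsplit (inr j)) unsplitK. Qed.

Lemma lpart_catf k n (x : pt M k) (y : pt M n) : lpart (catf x y) = x.
Proof. by apply: functional_extensionality => i; rewrite /lpart catf_lshift. Qed.

Lemma rpart_catf k n (x : pt M k) (y : pt M n) : rpart (catf x y) = y.
Proof. by apply: functional_extensionality => j; rewrite /rpart catf_rshift. Qed.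

Lemma lastc_catf k (x : pt M k) a : lastc (catf x (pt1 a)) = a.
Proof. exact: catf_rshift. Qed.

Lemma catf_parts k n (w : pt M (k + n)) : catf (lpart w) (rpart w) = w.
Proof.
apply: functional_extensionality => i; rewrite /catf /lpart /rpart.
by case E: (split i) => [j|j]; rewrite -[in RHS](splitK i) E.
Qed.

Lemma pt1_ord0 (x : pt M 1) : pt1 (x ord0) = x.
Proof. by apply: functional_extensionality => i; rewrite (ord1 i). Qed.

Lemma catf_lastc k (w : pt M (k + 1)) : catf (lpart w) (pt1 (lastc w)) = w.
Proof. by rewrite [pt1 _](pt1_ord0 (rpart w)) catf_parts. Qed.

Definition pt2 (a b : M) : pt M 2 := fun i => if i == ord0 then a else b.
Definition pt3 (a b c : M) : pt M 3 :=
  fun i => if i == ord0 then a else if i == ord_max then c else b.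

(* Definable sets are closed under substituting such terms for their variables
   ([Def_comp]); this is the only term algebra the argument needs. *)
Definition simple_term k (t : pt M k -> M) :=
  (exists j, forall z, t z = z j) \/ (exists c, forall z, t z = c).
Definition simple_map k n (Phi : pt M k -> pt M n) :=
  forall i, simple_term (fun z => Phi z i).

Lemma simple_map_catf k n1 n2 (Phi1 : pt M k -> pt M n1) (Phi2 : pt M k -> pt M n2) :
  simple_map Phi1 -> simple_map Phi2 -> simple_map (fun z => catf (Phi1 z) (Phi2 z)).
Proof. by move=> s1 s2 i; rewrite /catf; case: (split i). Qed.

Lemma simple_map_pt1 k (t : pt M k -> M) : simple_term t -> simple_map (fun z => pt1 (t z)).
Proof. by move=> st i. Qed.

Lemma simple_map_pt2 k (s t : pt M k -> M) :
  simple_term s -> simple_term t -> simple_map (fun z => pt2 (s z) (t z)).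
Proof. by move=> ss st i; rewrite /pt2; case: (i == ord0). Qed.

Lemma simple_map_pt3 k (s t u : pt M k -> M) : simple_term s -> simple_term t ->
  simple_term u -> simple_map (fun z => pt3 (s z) (t z) (u z)).
Proof. by move=> ss st su i; rewrite /pt3; case: (i == ord0); case: (i == ord_max). Qed.

Lemma simple_term_lpart k n (t : pt M k -> M) : simple_term t ->
  simple_term (fun w : pt M (k + n) => t (lpart w)).
Proof. by case=> [[j Ej] | [c Ec]]; [left; exists (lshift n j) | right; exists c]. Qed.

End Points.

Ltac simple_tac := repeat lazymatch goal with
  | |- simple_map (fun _ => catf _ _) => apply: simple_map_catf
  | |- simple_map (fun _ => pt1 _) => apply: simple_map_pt1
  | |- simple_map _ => move=> ?; left; eexists => ?; reflexivity
  | |- simple_term _ =>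
      first [left; eexists => ?; reflexivity | right; eexists => ?; reflexivity]
  end.

Section Definable.
Variable M : porderZmodType.
Variable Def : forall n, (pt M n -> Prop) -> Prop.
Hypothesis Hexp : is_expansion Def.

Lemma Def_ext k (A B : pt M k -> Prop) : Def A -> (forall z, A z <-> B z) -> Def B.
Proof.
move=> DA AB; suff <- : A = B by [].
by apply: functional_extensionality => z; apply: propositional_extensionality.
Qed.

Let Hstr : is_structure Def := let: And4 h _ _ _ := Hexp in h.

Lemma Def_False k : Def (fun _ : pt M k => False).
Proof. by case: Hstr. Qed.

Lemma Def_not k (A : pt M k -> Prop) : Def A -> Def (fun z => ~ A z).
Proof. by case: Hstr => _ [h _ _ _ _]; apply: h. Qed.

Lemma Def_or k (A B : pt M k -> Prop) : Def A -> Def B -> Def (fun z => A z \/ B z).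
Proof. by case: Hstr => _ [_ h _ _ _]; apply: h. Qed.

Lemma Def_prod k n (A : pt M k -> Prop) (B : pt M n -> Prop) :
  Def A -> Def B -> Def (fun w => A (lpart w) /\ B (rpart w)).
Proof. by case: Hstr => _ [_ _ h _ _]; apply: h. Qed.

Lemma Def_eq_coord k (i j : 'I_k) : Def (fun z : pt M k => z i = z j).
Proof. by case: Hstr => _ [_ _ _ h _]; apply: h. Qed.

Lemma Def_exists k n (A : pt M k -> pt M n -> Prop) :
  Def (fun w => A (lpart w) (rpart w)) -> Def (fun z => exists y, A z y).
Proof.
case: Hstr => _ [_ _ _ _ h] DA; apply: Def_ext (h _ _ _ DA) _ => z.
by split=> -[y Ay]; exists y; move: Ay; rewrite /= lpart_catf rpart_catf.
Qed.

Lemma Def_True k : Def (fun _ : pt M k => True).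
Proof. by apply: Def_ext (Def_not (@Def_False k)) _ => z; tauto. Qed.

Lemma Def_and k (A B : pt M k -> Prop) : Def A -> Def B -> Def (fun z => A z /\ B z).
Proof.
move=> DA DB; apply: Def_ext (Def_not (Def_or (Def_not DA) (Def_not DB))) _ => z.
by split=> [/not_or_and[/NNPP ? /NNPP ?] | [? ?] []].
Qed.

Lemma Def_imp k (A B : pt M k -> Prop) : Def A -> Def B -> Def (fun z => A z -> B z).
Proof.
move=> DA DB; apply: Def_ext (Def_or (Def_not DA) DB) _ => z.
by split=> [[] // | /imply_to_or].
Qed.

Lemma Def_forall k n (A : pt M k -> pt M n -> Prop) :
  Def (fun w => A (lpart w) (rpart w)) -> Def (fun z => forall y, A z y).
Proof.
move=> DA; apply: Def_ext (Def_not (Def_exists (A := fun z y => ~ A z y) (Def_not DA))) _.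
by move=> z; split=> [/not_ex_not_all // | h [y]].
Qed.

Lemma Def_exists1 k (A : pt M k -> M -> Prop) :
  Def (fun w => A (lpart w) (lastc w)) -> Def (fun z => exists a, A z a).
Proof.
move=> DA; apply: Def_ext (Def_exists (A := fun z y => A z (y ord0)) DA) _ => z.
by split=> [[y] | [a]]; [exists (y ord0) | exists (pt1 a)].
Qed.

Lemma Def_forall1 k (A : pt M k -> M -> Prop) :
  Def (fun w => A (lpart w) (lastc w)) -> Def (fun z => forall a, A z a).
Proof.
move=> DA; apply: Def_ext (Def_forall (A := fun z y => A z (y ord0)) DA) _ => z.
by split=> h a //; apply: (h (pt1 a)).
Qed.

Lemma Def_forall_fin (I : finType) k (A : I -> pt M k -> Prop) :
  (forall i, Def (A i)) -> Def (fun z => forall i, A i z).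
Proof.
move=> DA; suff Ds (s : seq I) : Def (fun z => forall i, i \in s -> A i z).
  by apply: Def_ext (Ds (enum I)) _ => z; split=> h i => [|_]; apply: h; rewrite ?mem_enum.
elim: s => [|j s IH]; first by apply: Def_ext (@Def_True k) _.
apply: Def_ext (Def_and (DA j) IH) _ => z; split.
  by move=> [Aj As] i; rewrite inE => /orP[/eqP-> // | /As].
by move=> h; split=> [|i si]; apply: h; rewrite inE ?eqxx ?si ?orbT.
Qed.

Lemma Def_eq_const k (l : 'I_k) c : Def (fun z : pt M k => z l = c).
Proof.
have Dc : Def (fun x : pt M 1 => x ord0 = c) by case: Hexp.
have Dw := Def_and (Def_prod (@Def_True k) Dc) (Def_eq_coord (lshift 1 l) (rshift k ord0)).
apply: Def_ext (Def_exists (A := fun z y => (True /\ y ord0 = c) /\ z l = y ord0) Dw) _.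
by move=> z; split=> [[y [[_ <-] ->]] | <-] //; exists (pt1 (z l)).
Qed.

Lemma Def_comp k n (A : pt M n -> Prop) (Phi : pt M k -> pt M n) :
  Def A -> simple_map Phi -> Def (fun z => A (Phi z)).
Proof.
move=> DA sPhi.
have Dgraph : Def (fun w : pt M (k + n) => forall i, rpart w i = Phi (lpart w) i).
  apply: Def_forall_fin => i; case: (sPhi i) => [[j Ej] | [c Ec]].
    by apply: Def_ext (Def_eq_coord (rshift k i) (lshift n j)) _ => w; rewrite Ej.
  by apply: Def_ext (Def_eq_const (rshift k i) c) _ => w; rewrite Ec.
have Dw := Def_and (Def_prod (@Def_True k) DA) Dgraph.
apply: Def_ext (Def_exists (A := fun z y => (True /\ A y) /\ forall i, y i = Phi z i) Dw) _ => z.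
split=> [[y [[_ Ay] Ey]] | APhi]; last by exists (Phi z).
by rewrite -(functional_extensionality _ _ Ey).
Qed.

Lemma Def_comp_ext k n (A : pt M n -> Prop) (Phi : pt M k -> pt M n) (B : pt M k -> Prop) :
  Def A -> simple_map Phi -> (forall z, A (Phi z) <-> B z) -> Def B.
Proof. by move=> DA sPhi; apply: Def_ext (Def_comp DA sPhi). Qed.

Lemma Def_eq_terms k (s t : pt M k -> M) :
  simple_term s -> simple_term t -> Def (fun z => s z = t z).
Proof.
move=> ss st; have Deq := Def_eq_coord (ord0 : 'I_2) (lift ord0 ord0).
by apply: (Def_comp_ext Deq (simple_map_pt2 ss st)) => z; rewrite /pt2 /=.
Qed.

Lemma Def_lt_terms k (s t : pt M k -> M) :
  simple_term s -> simple_term t -> Def (fun z => s z < t z).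
Proof.
move=> ss st; have Dlt : Def (fun x : pt M 2 => x ord0 < x (lift ord0 ord0)) by case: Hexp.
by apply: (Def_comp_ext Dlt (simple_map_pt2 ss st)) => z; rewrite /pt2 /=.
Qed.

Lemma Def_le_terms k (s t : pt M k -> M) :
  simple_term s -> simple_term t -> Def (fun z => s z <= t z).
Proof.
move=> ss st; apply: Def_ext (Def_or (Def_eq_terms ss st) (Def_lt_terms ss st)) _ => z.
by rewrite le_eqVlt; split=> [[->|->] | /orP[/eqP|]]; rewrite ?eqxx ?orbT; auto.
Qed.

Lemma Def_between_terms k (s t u : pt M k -> M) :
  simple_term s -> simple_term t -> simple_term u ->
  Def (fun z => s z <= t z <= u z).
Proof.
move=> ss st su; apply: Def_ext (Def_and (Def_le_terms ss st) (Def_le_terms st su)) _.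
by move=> z; split=> [[-> ->] | /andP].
Qed.

Lemma Def_ltD_terms k (s t u : pt M k -> M) : simple_term s -> simple_term t -> simple_term u ->
  Def (fun z => s z < t z + u z).
Proof.
move=> ss st su.
have Dsum : Def (fun x : pt M 3 => x ord0 + x (lift ord0 ord0) = x ord_max) by case: Hexp.
have Dw : Def (fun w : pt M (k + 1) =>
    s (lpart w) < lastc w /\ t (lpart w) + u (lpart w) = lastc w).
  apply: Def_and; first by apply: Def_lt_terms; [exact: simple_term_lpart | simple_tac].
  apply: (Def_comp_ext Dsum (Phi := fun w => pt3 (t (lpart w)) (u (lpart w)) (lastc w))).
    by apply: simple_map_pt3; [exact: simple_term_lpart | exact: simple_term_lpart | simple_tac].
  by move=> w; rewrite /pt3 /=.
apply: Def_ext (Def_exists1 (A := fun z a => s z < a /\ t z + u z = a) Dw) _ => z.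
by split=> [[a [lt_sa eq_a]] | lt_s]; [rewrite eq_a | exists (t z + u z)].
Qed.

Lemma Def_near_terms k (r s t : pt M k -> M) : simple_term r -> simple_term s -> simple_term t ->
  Def (fun z => near (r z) (s z) (t z)).
Proof. by move=> sr ss st; exact: Def_and (Def_ltD_terms ss sr st) (Def_ltD_terms st sr ss). Qed.

Lemma Def_ball k n (Phi Psi : pt M k -> pt M n) (r : pt M k -> M) :
  simple_map Phi -> simple_map Psi -> simple_term r -> Def (fun z => ball (Phi z) (r z) (Psi z)).
Proof.
move=> sPhi sPsi sr; apply: Def_and; first by apply: Def_lt_terms => //; simple_tac.
by apply: Def_forall_fin => i; apply: Def_near_terms.
Qed.

Lemma Def_in_box B k n (Phi : pt M k -> pt M n) :
  simple_map Phi -> Def (fun z => in_box B (Phi z)).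
Proof.
by move=> sPhi; apply: Def_forall_fin => i; apply: Def_between_terms => //; simple_tac.
Qed.

End Definable.

Section Compactness.
Variable M : porderZmodType.
Hypothesis HM : ordered_abelian_group M.
Variable Def : forall n, (pt M n -> Prop) -> Prop.
Hypothesis Hexp : is_expansion Def.
Hypothesis Hdc : definably_complete Def.
Hypothesis dense : densely_ordered M.

Lemma ball_catf1 m (y y' : pt M m) t t' s :
  ball (catf (pt1 t) y) s (catf (pt1 t') y') <-> near s t t' /\ ball y s y'.
Proof.
split=> [[s_gt0 near_s] | [near_t [s_gt0 near_y]]].
  split; first by have := near_s (lshift m ord0); rewrite !catf_lshift.
  by split=> // j; have := near_s (rshift 1 j); rewrite !catf_rshift.
split=> // i; rewrite -(splitK i); case: (split i) => j /=.
  by rewrite !catf_lshift.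
by rewrite !catf_rshift.
Qed.

Lemma in_box_catf1 B m (y : pt M m) t :
  in_box B (catf (pt1 t) y) <-> - B <= t <= B /\ in_box B y.
Proof.
split=> [box | [t_in y_in] i].
  split; first by have := box (lshift m ord0); rewrite catf_lshift.
  by move=> j; have := box (rshift 1 j); rewrite catf_rshift.
rewrite -(splitK i); case: (split i) => j /=.
  by rewrite catf_lshift.
by rewrite catf_rshift.
Qed.

Definition radius_upto (G : M -> M -> Prop) B t :=
  exists d, 0 < d /\ forall y, - B <= y <= t -> G y d.

Lemma Def_radius_upto (G : M -> M -> Prop) B :
  Def (fun w : pt M (1 + 1) => G (lpart w ord0) (lastc w)) ->
  Def (fun z : pt M 1 => radius_upto G B (z ord0)).
Proof.
move=> DG.
apply: (Def_exists1 Hexp (A := fun z d => 0 < d /\ forall y, - B <= y <= z ord0 -> G y d)).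
apply: (Def_and Hexp); first by apply: Def_lt_terms; simple_tac.
apply: (Def_forall1 Hexp (A := fun w y => - B <= y <= lpart w ord0 -> G y (lastc w))).
apply: (Def_imp Hexp); first by apply: Def_between_terms; simple_tac.
apply: (Def_comp_ext Hexp DG (Phi := fun w => catf (pt1 (lastc w)) (pt1 (lastc (lpart w))))).
  by simple_tac.
by move=> w; rewrite lpart_catf lastc_catf.
Qed.

Lemma uniform_radius_interval B (G : M -> M -> Prop) :
  0 <= B -> Def (fun w : pt M (1 + 1) => G (lpart w ord0) (lastc w)) ->
  (forall t r r', 0 < r' -> r' <= r -> G t r -> G t r') ->
  (forall t, - B <= t <= B ->
     exists2 s, 0 < s & forall t', - B <= t' <= B -> near s t t' -> G t' s) ->
  exists2 d, 0 < d & forall t, - B <= t <= B -> G t d.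
Proof.
move=> B_ge0 DG G_le loc.
pose S t := - B <= t <= B /\ radius_upto G B t.
have DS : Def (fun z : pt M 1 => S (z ord0)).
  apply: (Def_and Hexp); last exact: Def_radius_upto.
  by apply: Def_between_terms; simple_tac.
have mB_in : - B <= - B <= B by rewrite lexx (oppr_le_self HM).
have S_mB : S (- B).
  have [s s_gt0 Gs] := loc (- B) mB_in; split=> //; exists s; split=> // y /andP[mB_y y_mB].
  by rewrite (@le_anti _ _ y (- B)) ?mB_y ?y_mB //; apply: Gs => //; apply: (near_refl HM).
have [sig [ub_sig least_sig]] : exists sig, is_ub S sig /\ forall b, is_ub S b -> sig <= b.
  by case: (Hdc DS) => sup _; apply: sup; [exists (- B) | exists B => t [/andP[]]].
have sig_in : - B <= sig <= B by rewrite ub_sig // least_sig // => t [/andP[]].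
have [s s_gt0 Gs] := loc sig sig_in.
have [t [_ [d [d_gt0 Gd]]] lt_t] := lub_approx HM least_sig s_gt0.
have [d' [d'_gt0 d'_d d'_s]] := exists_le2_pos HM d_gt0 s_gt0.
have extend t2 : - B <= t2 <= B -> t2 < s + sig -> S t2.
  move=> /andP[mB_t2 t2_B] t2_lt; split; first by rewrite mB_t2.
  exists d'; split=> // y /andP[mB_y y_t2].
  case: (comparable_leP (comparableM HM y t)) => [y_t | t_y].
    by apply: (G_le _ d) => //; apply: Gd; rewrite mB_y.
  apply: (G_le _ s) => //; apply: Gs; first by rewrite mB_y (le_trans y_t2).
  split; last exact: le_lt_trans t2_lt.
  by rewrite addrC -(subr_lt HM) (lt_trans lt_t t_y).
case: (comparable_leP (comparableM HM B sig)) => [B_sig | sig_B].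
  have [_ [d2 [d2_gt0 Gd2]]] : S B.
    apply: extend; first by rewrite (oppr_le_self HM) ?lexx.
    by apply: le_lt_trans B_sig _; rewrite (lt_addl HM).
  by exists d2 => // t' /andP[]; apply: Gd2.
have Bsig_gt0 : 0 < B - sig by rewrite (subr_gt0 HM).
have [c [c_gt0 c_s c_B]] := exists_le2_pos HM s_gt0 Bsig_gt0.
have [a /andP[a_gt0 a_c]] := dense c_gt0.
have : a + sig <= sig.
  apply: ub_sig; apply: extend; last by rewrite (ltD2r HM) (lt_le_trans a_c).
  have /andP[mB_sig _] := sig_in.
  rewrite (le_trans mB_sig) ?(le_addl HM) ?ltW //=.
  by rewrite -(subrK sig B) (ltD2r HM) (lt_le_trans a_c).
have sig_lt : sig < a + sig by rewrite (lt_addl HM).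
by move/(lt_le_trans sig_lt); rewrite ltxx.
Qed.

Definition tube_radius m (G : pt M (1 + m) -> M -> Prop) B t (y : pt M m) r :=
  forall t', - B <= t' <= B -> near r t t' -> G (catf (pt1 t') y) r.

Lemma Def_tube_radius m (G : pt M (1 + m) -> M -> Prop) B :
  Def (fun w : pt M ((1 + m) + 1) => G (lpart w) (lastc w)) ->
  Def (fun w : pt M ((1 + m) + 1) =>
         tube_radius G B (lpart (lpart w) ord0) (rpart (lpart w)) (lastc w)).
Proof.
move=> DG; apply: (Def_forall1 Hexp (A := fun w t' => - B <= t' <= B ->
  near (lastc w) (lpart (lpart w) ord0) t' -> G (catf (pt1 t') (rpart (lpart w))) (lastc w))).
apply: (Def_imp Hexp); first by apply: Def_between_terms; simple_tac.
apply: (Def_imp Hexp); first by apply: Def_near_terms; simple_tac.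
apply: (Def_comp_ext Hexp DG (Phi := fun w =>
  catf (catf (pt1 (lastc w)) (rpart (lpart (lpart w)))) (pt1 (lastc (lpart w))))).
  by simple_tac.
by move=> w; rewrite lpart_catf lastc_catf.
Qed.

Lemma tube_radius_le m (G : pt M (1 + m) -> M -> Prop) B t y r r' :
  (forall x r r', 0 < r' -> r' <= r -> G x r -> G x r') ->
  0 < r' -> r' <= r -> tube_radius G B t y r -> tube_radius G B t y r'.
Proof.
move=> G_le r'_gt0 r'_r tube t' t'_in near_t'.
by apply: (G_le _ r) => //; apply: tube t'_in (near_le HM r'_r near_t').
Qed.

Lemma uniform_radius_box m B (G : pt M m -> M -> Prop) :
  0 <= B -> Def (fun w : pt M (m + 1) => G (lpart w) (lastc w)) ->
  (forall x r r', 0 < r' -> r' <= r -> G x r -> G x r') ->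
  (forall x, in_box B x -> exists2 s, 0 < s & forall y, in_box B y -> ball x s y -> G y s) ->
  exists2 d, 0 < d & forall x, in_box B x -> G x d.
Proof.
elim: m G => [|m IH] G B_ge0 DG G_le loc.
  have no_ord0 (i : 'I_0) : False by move: (ltn_ord i); rewrite ltn0.
  have pt0_eq (x y : pt M 0) : x = y.
    by apply: functional_extensionality => i; case: (no_ord0 i).
  have [s s_gt0 Gs] := loc (fun _ => 0) (fun i => False_ind _ (no_ord0 i)).
  exists s => // x x_in; rewrite (pt0_eq x (fun _ => 0)) in x_in *.
  exact: Gs x_in (ball_refl HM _ s_gt0).
have tubes t : - B <= t <= B -> exists2 d, 0 < d & forall y, in_box B y -> tube_radius G B t y d.
  move=> t_in; apply: IH => //.
  - apply: (Def_comp_ext Hexp (Def_tube_radius B DG)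
      (Phi := fun w : pt M (m + 1) => catf (catf (pt1 t) (lpart w)) (pt1 (lastc w)))).
      by simple_tac.
    by move=> w; rewrite !lpart_catf rpart_catf lastc_catf.
  - by move=> y r r' r'_gt0 r'_r; apply: tube_radius_le.
  move=> y y_in; have /loc[s s_gt0 Gs] : in_box B (catf (pt1 t) y) by apply/in_box_catf1.
  exists s => // y' y'_in yy' t' t'_in tt'.
  by apply: Gs; [apply/in_box_catf1 | apply/ball_catf1].
have [d d_gt0 Gd] : exists2 d, 0 < d &
    forall t, - B <= t <= B -> forall y, in_box B y -> tube_radius G B t y d.
  apply: uniform_radius_interval => //.
  - apply: (Def_forall Hexp
      (A := fun w y => in_box B y -> tube_radius G B (lpart w ord0) y (lastc w))).
    apply: (Def_imp Hexp); first by apply: Def_in_box; simple_tac.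
    apply: (Def_comp_ext Hexp (Def_tube_radius B DG) (Phi := fun w : pt M ((1 + 1) + m) =>
      catf (catf (lpart (lpart w)) (rpart w)) (pt1 (lastc (lpart w))))).
      by simple_tac.
    by move=> w; rewrite !lpart_catf rpart_catf lastc_catf.
  - move=> t r r' r'_gt0 r'_r tubes_r y y_in.
    exact: tube_radius_le G_le r'_gt0 r'_r (tubes_r y y_in).
  move=> t t_in; have [dt dt_gt0 Gdt] := tubes t t_in.
  have [h h_gt0 hh] := exists_half HM dense dt_gt0.
  have h_dt := le_double HM (ltW h_gt0) hh.
  exists h => // t1 t1_in near_t1 y y_in t' t'_in near_t'; apply: (G_le _ dt) => //.
  exact: Gdt y_in t' t'_in (near_le HM hh (near_trans HM near_t1 near_t')).
exists d => // x; rewrite -[x](@catf_parts _ 1 m) -(pt1_ord0 (lpart _)).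
move=> /in_box_catf1[t_in y_in]; by apply: (Gd _ t_in _ y_in _ t_in); apply: (near_refl HM).
Qed.

End Compactness.

Section Equicontinuity.
Variable M : porderZmodType.
Hypothesis HM : ordered_abelian_group M.
Variable Def : forall n, (pt M n -> Prop) -> Prop.
Hypothesis Hexp : is_expansion Def.
Variables (m n : nat) (C : pt M m -> Prop) (P : pt M n -> Prop) (f : pt M m -> pt M n -> M).

Definition modulus e x r :=
  C x -> forall p x', P p -> C x' -> ball x r x' -> near e (f x p) (f x' p).

Lemma modulus_le e x r r' : 0 < r' -> r' <= r -> modulus e x r -> modulus e x r'.
Proof.
move=> r'_gt0 r'_r mod_r Cx p x' Pp Cx' xx'.
by apply: mod_r => //; exact: (ball_le HM r'_r xx').
Qed.

Lemma Def_modulus e : Def C -> Def P -> definable_fun Def C P f ->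
  Def (fun w : pt M (m + 1) => modulus e (lpart w) (lastc w)).
Proof.
(* [f] is available only through its definable graph [F]. *)
move=> DC DP Df; pose F x p u := C x /\ P p /\ u = f x p.
have DF : Def (fun w : pt M ((m + n) + 1) => F (lpart (lpart w)) (rpart (lpart w)) (lastc w)).
  apply: Def_ext Df _ => w; split=> [[x [p [Cx [Pp ->]]]] | [Cx [Pp fw]]].
    by rewrite !lpart_catf rpart_catf lastc_catf.
  exists (lpart (lpart w)), (rpart (lpart w)); do !split=> //.
  by rewrite -fw catf_parts catf_lastc.
have DFcomp k (X : pt M k -> pt M m) (Q : pt M k -> pt M n) (U : pt M k -> M) :
    simple_map X -> simple_map Q -> simple_term U -> Def (fun z => F (X z) (Q z) (U z)).
  move=> sX sQ sU.
  apply: (Def_comp_ext Hexp DF (Phi := fun z => catf (catf (X z) (Q z)) (pt1 (U z)))).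
    by apply: simple_map_catf; [apply: simple_map_catf | apply: simple_map_pt1].
  by move=> z; rewrite !lpart_catf rpart_catf lastc_catf.
have Dprenex : Def (fun w : pt M (m + 1) => forall p x' u v, C (lpart w) -> P p -> C x' ->
    ball (lpart w) (lastc w) x' -> F (lpart w) p u -> F x' p v -> near e u v).
  do 2 apply: (Def_forall Hexp); do 2 apply: (Def_forall1 Hexp).
  do 3 (apply: (Def_imp Hexp);
    first by apply: (Def_comp Hexp); [exact: DC || exact: DP | simple_tac]).
  apply: (Def_imp Hexp); first by apply: Def_ball; simple_tac.
  do 2 (apply: (Def_imp Hexp); first by apply: DFcomp; simple_tac).
  by apply: Def_near_terms; simple_tac.
apply: Def_ext Dprenex _ => w; split=> [pre Cx p x' Pp Cx' xx' | mod p x' u v].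
  by apply: (pre p x') => //; rewrite /F.
by move=> Cx Pp Cx' xx' [_ [_ ->]] [_ [_ ->]]; apply: mod.
Qed.

Lemma modulus_local e : densely_ordered M -> closed_set C -> equicontinuous C P f ->
  0 < e -> forall x, exists2 s, 0 < s & forall y, ball x s y -> modulus e y s.
Proof.
move=> dense C_closed equi e_gt0 x; case: (classic (C x)) => [Cx | notCx].
  have [e' e'_gt0 ee'] := exists_half HM dense e_gt0.
  have [r [r_gt0 near_x]] := equi e' e'_gt0 x Cx.
  have [s s_gt0 ss] := exists_half HM dense r_gt0.
  have s_r := le_double HM (ltW s_gt0) ss.
  exists s => // y xy Cy p x' Pp Cx' yx'.
  have /(absM_subr_lt HM) fxy := near_x p y Pp Cy (proj2 (dist_lt HM _ _ _) (ball_le HM s_r xy)).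
  have /(absM_subr_lt HM) fxx' :=
    near_x p x' Pp Cx' (proj2 (dist_lt HM _ _ _) (ball_le HM ss (ball_trans HM xy yx'))).
  exact: (near_le HM ee' (near_trans HM (near_sym fxy) fxx')).
have [r [r_gt0 far]] : exists r, 0 < r /\ forall y, C y -> ~ dist x y < r.
  apply: NNPP => no_r; apply: notCx; apply: C_closed => r r_gt0.
  apply: NNPP => no_y; apply: no_r; exists r; split=> // y Cy xy; apply: no_y; by exists y.
by exists r => // y /(dist_lt HM) xy Cy; case: (far y Cy).
Qed.

Lemma equicontinuous_uniformly : definably_complete Def -> Def C -> Def P ->
  definable_fun Def C P f -> closed_set C -> bounded_set C ->
  equicontinuous C P f -> unif_equicontinuous C P f.
Proof.
move=> Hdc DC DP Df C_closed C_bounded equi e e_gt0.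
case: (classic (exists r : M, 0 < r /\ forall c, ~ (0 < c < r)))
  => [[r [r_gt0 gap]] | no_gap].
  exists r; split=> // p x x' Pp Cx Cx' /(dist_lt HM) /(ball_eq_of_gap HM gap) <-.
  by apply/(absM_subr_lt HM); apply: (near_refl HM).
have dense : densely_ordered M.
  move=> r r_gt0; apply: NNPP => no_c; apply: no_gap; exists r; split=> // c c_in.
  by apply: no_c; exists c.
have [B B_ge0 C_box] := bounded_in_box HM C_bounded.
have [d d_gt0 mod_d] : exists2 d, 0 < d & forall x, in_box B x -> modulus e x d.
  apply: (uniform_radius_box HM Hexp Hdc dense B_ge0 (Def_modulus e DC DP Df) (@modulus_le e)).
  move=> x _; have [s s_gt0 mod_s] := modulus_local dense C_closed equi e_gt0 x.
  by exists s => // y _; apply: mod_s.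
exists d; split=> // p x x' Pp Cx Cx' /(dist_lt HM) xx'.
exact/(absM_subr_lt HM)/(mod_d x (C_box x Cx) Cx p x' Pp Cx' xx').
Qed.

End Equicontinuity.

Lemma unif_equicontinuous_equicontinuous (M : porderZmodType) m n
    (C : pt M m -> Prop) (P : pt M n -> Prop) (f : pt M m -> pt M n -> M) :
  unif_equicontinuous C P f -> equicontinuous C P f.
Proof.
move=> unif e e_gt0 x Cx; have [d [d_gt0 Hd]] := unif e e_gt0.
by exists d; split=> // p x' Pp; apply: Hd.
Qed.

Theorem mainTheorem5 (M : porderZmodType) (HM : ordered_abelian_group M)
  (Def : forall n, (pt M n -> Prop) -> Prop)
  (Hexp : is_expansion Def) (Hdc : definably_complete Def)
  (Hlom : locally_o_minimal Def)
  (m n : nat) (C : pt M m -> Prop) (P : pt M n -> Prop)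
  (HC : Def m C) (HP : Def n P) (HCcl : closed_set C) (HCbd : bounded_set C)
  (f : pt M m -> pt M n -> M) (Hf : definable_fun Def C P f) :
  equicontinuous C P f <-> unif_equicontinuous C P f.
Proof.
split; last exact: unif_equicontinuous_equicontinuous.
exact: (equicontinuous_uniformly HM Hexp Hdc HC HP Hf HCcl HCbd).
Qed.
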